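(* Let $p$ be a prime, $f\in\mathbb{Z}_p[x]$, $n\ge1$, let $\sigma=(x_1,\dots,x_k)$ be a $k$-cycle of $f_n$ (with representatives $x_i\in\mathbb{Z}_p$), and let $\tilde\sigma$ be a lift of $\sigma$ of length $kr$, $r\ge1$. Put $a_n(x)=(f^k)'(x)$, $b_n(x)=(f^k(x)-x)/p^n$, $a_{n+1}(x)=(f^{kr})'(x)$, $b_{n+1}(x)=(f^{kr}(x)-x)/p^{n+1}$. Then for all $1\le i\le k$ and $0\le t\le p-1$, $$a_{n+1}(x_i+p^nt)\equiv a_n(x_i)^r\pmod{p^n},$$ $$p\,b_{n+1}(x_i+p^nt)\equiv t\big(a_n(x_i)^r-1\big)+b_n(x_i)\big(1+a_n(x_i)+\dots+a_n(x_i)^{r-1}\big)\pmod{p^n}.$$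
   Context: $f_n$ is the induced map on $\mathbb{Z}/p^n\mathbb{Z}$, $f_n(x\bmod p^n)=f(x)\bmod p^n$. A $k$-cycle of $f_n$ is a tuple of distinct elements $x_1,\dots,x_k$ with $f_n(x_i)=x_{i+1}$, $f_n(x_k)=x_1$. The lifts of $\sigma$ are the cycles of $f_{n+1}$ contained in $\{y\in\mathbb{Z}/p^{n+1}\mathbb{Z}:y\bmod p^n\in\sigma\}$; their lengths are multiples of $k$. *)

From HB Require Import structures.
From mathcomp Require Import all_boot all_order all_algebra.
From mathcomp Require Import boolp zify.
Set Implicit Arguments. Unset Strict Implicit. Unset Printing Implicit Defensive.
Import GRing.Theory.
Local Open Scope ring_scope.

(* The ring Z_p of p-adic integers, as the inverse limit of Z/m^k Z,        *)
(* m := maxn p 2 (so m = p whenever p is prime; the maxn only guards the     *)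
(* degenerate p = 0, 1).  An element is a compatible sequence of residues.   *)
Section Padic.
Variable p : nat.

Definition pbase := maxn p 2.

Lemma pbase_gt1 : (1 < pbase)%N.
Proof. by rewrite /pbase leq_max leqnn orbT. Qed.

Lemma pbaseX_gt0 k : (0 < pbase ^ k)%N.
Proof. by rewrite expn_gt0 (ltn_trans _ pbase_gt1). Qed.

Definition padic_pred (s : nat -> nat) :=
  forall k, (s k < pbase ^ k)%N /\ (s k.+1 %% pbase ^ k = s k)%N.

Definition padic_int := {s : nat -> nat | padic_pred s}.

HB.instance Definition _ := gen_eqMixin padic_int.
HB.instance Definition _ := gen_choiceMixin padic_int.

Lemma Zp_eq (x y : padic_int) : (forall k, proj1_sig x k = proj1_sig y k) -> x = y.
Proof.
case: x => [s hs]; case: y => [t ht] /= e.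
have est : s = t by apply: funext.
subst t; congr exist; exact: Prop_irrelevance.
Qed.

Lemma dvd_pbaseS k : (pbase ^ k %| pbase ^ k.+1)%N.
Proof. by rewrite expnS dvdn_mull. Qed.

Definition mk_op (g : nat -> nat) := fun k => (g k %% pbase ^ k)%N.

Lemma mk_op_pred (g : nat -> nat) :
  (forall k, g k.+1 = g k %[mod pbase ^ k])%N -> padic_pred (mk_op g).
Proof.
move=> h k; split; first by rewrite ltn_mod pbaseX_gt0.
by rewrite /mk_op modn_dvdm ?dvd_pbaseS // h.
Qed.

Lemma Zp_compat (x : padic_int) k : (proj1_sig x k.+1 = proj1_sig x k %[mod pbase ^ k])%N.
Proof.
case: x => s hs /=; have [lt e] := hs k.
by rewrite e modn_small.
Qed.

Lemma Zp_small (x : padic_int) k : (proj1_sig x k %% pbase ^ k = proj1_sig x k)%N.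
Proof. by case: x => s hs /=; rewrite modn_small //; case: (hs k). Qed.

Definition Zp0 : padic_int := exist _ (mk_op (fun _ => 0%N)) (@mk_op_pred (fun _ => 0%N) (fun _ => erefl)).
Definition Zp1 : padic_int := exist _ (mk_op (fun _ => 1%N)) (@mk_op_pred (fun _ => 1%N) (fun _ => erefl)).

Definition Zp_add (x y : padic_int) : padic_int.
Proof.
exists (mk_op (fun k => proj1_sig x k + proj1_sig y k)%N); apply: mk_op_pred => k.
by rewrite -modnDm Zp_compat (Zp_compat y) modnDm.
Defined.

Definition Zp_mul (x y : padic_int) : padic_int.
Proof.
exists (mk_op (fun k => proj1_sig x k * proj1_sig y k)%N); apply: mk_op_pred => k.
by rewrite -modnMm Zp_compat (Zp_compat y) modnMm.
Defined.

Definition Zp_opp (x : padic_int) : padic_int.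
Proof.
exists (mk_op (fun k => pbase ^ k - proj1_sig x k)%N); apply: mk_op_pred => k.
set P := (pbase ^ k)%N; set s' := proj1_sig x k.+1.
have lt1 : (s' < P * pbase)%N by rewrite /s' /P -expnSr; case: (proj2_sig x k.+1).
have e : (s' = s' %/ P * P + proj1_sig x k)%N.
  by rewrite {1}(divn_eq s' P) /s' Zp_compat Zp_small.
have lt0 : (proj1_sig x k < P)%N by case: (proj2_sig x k).
have hq : (s' %/ P < pbase)%N by rewrite ltn_divLR ?pbaseX_gt0 // mulnC.
rewrite expnSr -/P.
have -> : (P * pbase - s' = P * (pbase - (s' %/ P).+1) + (P - proj1_sig x k))%N.
  rewrite {1}e; move: hq lt0; set q := (s' %/ P)%N; set a := proj1_sig x k.
  move=> hq lt0; nia.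
by rewrite mulnC modnMDl.
Defined.

Lemma Zp_addA : associative Zp_add.
Proof. by move=> x y z; apply: Zp_eq => k /=; rewrite /mk_op modnDml modnDmr addnA. Qed.
Lemma Zp_addC : commutative Zp_add.
Proof. by move=> x y; apply: Zp_eq => k /=; rewrite /mk_op addnC. Qed.
Lemma Zp_add0 : left_id Zp0 Zp_add.
Proof. by move=> x; apply: Zp_eq => k /=; rewrite /mk_op mod0n add0n Zp_small. Qed.
Lemma Zp_addN : left_inverse Zp0 Zp_opp Zp_add.
Proof.
move=> x; apply: Zp_eq => k /=; rewrite /mk_op modnDml subnK ?modnn ?mod0n //.
by apply: ltnW; case: (proj2_sig x k).
Qed.

HB.instance Definition _ := GRing.isZmodule.Build padic_int Zp_addA Zp_addC Zp_add0 Zp_addN.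

Lemma Zp_mulA : associative Zp_mul.
Proof. by move=> x y z; apply: Zp_eq => k /=; rewrite /mk_op modnMml modnMmr mulnA. Qed.
Lemma Zp_mulC : commutative Zp_mul.
Proof. by move=> x y; apply: Zp_eq => k /=; rewrite /mk_op mulnC. Qed.
Lemma Zp_mul1 : left_id Zp1 Zp_mul.
Proof. by move=> x; apply: Zp_eq => k /=; rewrite /mk_op modnMml mul1n Zp_small. Qed.
Lemma Zp_mulDl : left_distributive Zp_mul Zp_add.
Proof.
move=> x y z; apply: Zp_eq => k /=.
by rewrite /mk_op modnMml modnDm mulnDl.
Qed.
Lemma Zp_one_neq0 : Zp1 != Zp0 :> padic_int.
Proof.
apply/eqP => /(f_equal (fun x : padic_int => proj1_sig x 1%N)) /=.
by rewrite /mk_op expn1 mod0n modn_small ?pbase_gt1.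
Qed.

HB.instance Definition _ := GRing.Zmodule_isComNzRing.Build padic_int
  Zp_mulA Zp_mulC Zp_mul1 Zp_mulDl Zp_one_neq0.

End Padic.

Definition congp (p n : nat) (a b : padic_int p) : Prop :=
  exists c : padic_int p, a - b = (p%:R) ^+ n * c.

Arguments congp : clear implicits.

(* exact division by p^n in Z_p: the z with y = p^n * z (0 if none exists) *)
Definition pdivn (p n : nat) (y : padic_int p) : padic_int p :=
  match pselect (exists z : padic_int p, y = (p%:R) ^+ n * z) with
  | left h => projT1 (cid h)
  | right _ => 0
  end.

Arguments pdivn : clear implicits.

Definition poly_iter (R : comNzRingType) (f : {poly R}) (k : nat) : {poly R} :=
  iter k (fun g => f \Po g) 'X.

(* x 0, ..., x (k-1) (elements of Z_p) represent a k-cycle of the induced map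
   f_n on Z/p^nZ: their classes mod p^n are pairwise distinct and
   f_n (x i mod p^n) = x (i+1 mod k) mod p^n. *)
Definition is_cycle_rep (p : nat) (f : {poly padic_int p}) (n k : nat)
    (x : nat -> padic_int p) : Prop :=
  (0 < k)%N /\
  (forall i j, (i < k)%N -> (j < k)%N -> congp p n (x i) (x j) -> i = j) /\
  (forall i, (i < k)%N -> congp p n f.[x i] (x ((i.+1 %% k)%N))).

(* y 0, ..., y (m-1) represent a lift (of length m) of the cycle represented
   by x 0, ..., x (k-1): a cycle of f_(n+1) all of whose elements reduce mod
   p^n to elements of the cycle of f_n. *)
Definition is_lift_rep (p : nat) (f : {poly padic_int p}) (n k : nat)
    (x : nat -> padic_int p) (m : nat) (y : nat -> padic_int p) : Prop :=
  is_cycle_rep f n.+1 m y /\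
  (forall j, (j < m)%N -> exists2 i, (i < k)%N & congp p n (y j) (x i)).

(* Write z = x_i + p^n t and g = f^k.  Since x_i is a periodic point of f_n of
   period k, g(x_i) = x_i + p^n b with b = b_n(x_i).  A first-order Taylor
   expansion gives g(x_i + p^n s) = x_i + p^n (b + a s) modulo p^(2n), where
   a = g'(x_i); iterating r times, f^(kr)(z) = x_i + p^n s_r with
   s_r = a^r t + b (1 + a + ... + a^(r-1)) mod p^n, whence the formula for
   (f^(kr)(z) - z) / p^n = s_r - t.  The chain rule and the fact that every
   iterate g^j(z) stays congruent to x_i give (g^r)'(z) = a^r mod p^n. *)

From HB Require Import structures.
From mathcomp Require Import all_boot all_order all_algebra.
From mathcomp Require Import boolp ring.
Set Implicit Arguments.
Unset Strict Implicit.
Unset Printing Implicit Defensive.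
Import GRing.Theory.
Local Open Scope ring_scope.

Section CongruenceModulo.
Variables (R : comNzRingType) (P : R).

Definition eqmod (a b : R) := exists c, a - b = P * c.

Lemma eqmodP a b : eqmod a b <-> exists c, a = b + P * c.
Proof.
by split=> -[c h]; exists c; [rewrite -h | rewrite h]; ring.
Qed.

Lemma eqmod_refl a : eqmod a a.
Proof. by exists 0; ring. Qed.

Lemma eqmod_trans a b c : eqmod a b -> eqmod b c -> eqmod a c.
Proof. by move=> [u hu] [v hv]; exists (u + v); rewrite mulrDr -hu -hv; ring. Qed.

Lemma eqmodD a b c d : eqmod a b -> eqmod c d -> eqmod (a + c) (b + d).
Proof. by move=> [u hu] [v hv]; exists (u + v); rewrite mulrDr -hu -hv; ring. Qed.

Lemma eqmodM a b c d : eqmod a b -> eqmod c d -> eqmod (a * c) (b * d).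
Proof.
move=> /eqmodP[u ->] /eqmodP[v ->].
by exists (u * d + b * v + P * u * v); ring.
Qed.

Lemma horner_add_deriv (q : {poly R}) x h :
  exists e, q.[x + h] = q.[x] + h * q^`().[x] + h ^+ 2 * e.
Proof.
elim/poly_ind: q => [|q c [e IH]]; first by exists 0; rewrite deriv0 !horner0; ring.
exists (q^`().[x] + e * x + h * e).
by rewrite derivMXaddC !hornerMXaddC hornerD hornerMX IH; ring.
Qed.

Lemma eqmod_horner (q : {poly R}) a b : eqmod a b -> eqmod q.[a] q.[b].
Proof.
move=> /eqmodP[c ->]; have [e ->] := horner_add_deriv q b (P * c).
by apply/eqmodP; exists (c * q^`().[b] + P * c ^+ 2 * e); ring.
Qed.

End CongruenceModulo.

Arguments eqmod_refl {R P}.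

Section PolyIter.
Variable R : comNzRingType.
Implicit Types f g : {poly R}.

Lemma poly_iterS f j : poly_iter f j.+1 = f \Po poly_iter f j.
Proof. by []. Qed.

Lemma poly_iterD f j l : poly_iter f (j + l) = poly_iter f j \Po poly_iter f l.
Proof.
elim: j => [|j IH]; first by rewrite add0n /= comp_polyX.
by rewrite addSn /= IH comp_polyA.
Qed.

Lemma poly_iterM f k r : poly_iter f (k * r) = poly_iter (poly_iter f k) r.
Proof. by elim: r => [|r IH]; rewrite ?muln0 // mulnS poly_iterD IH. Qed.

(* In the theorem g = f^k, x0 = x_i, and b, a are b_n(x_i), a_n(x_i). *)
Variables (P : R) (g : {poly R}) (x0 b : R).
Hypothesis gx0 : g.[x0] = x0 + P * b.
Let a := g^`().[x0].

Lemma horner_poly_iter_eqmod j y :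
  eqmod P y x0 -> eqmod P (poly_iter g j).[y] x0.
Proof.
move=> yx0; elim: j => [|j IH]; first by rewrite hornerX.
rewrite poly_iterS horner_comp; apply: eqmod_trans (eqmod_horner g IH) _.
by exists b; rewrite gx0; ring.
Qed.

Lemma deriv_poly_iter_eqmod j y :
  eqmod P y x0 -> eqmod P (poly_iter g j)^`().[y] (a ^+ j).
Proof.
move=> yx0; elim: j => [|j IH]; first by rewrite derivX hornerC; exact: eqmod_refl.
rewrite poly_iterS deriv_comp hornerM horner_comp exprS.
exact: eqmodM (eqmod_horner _ (horner_poly_iter_eqmod j yx0)) IH.
Qed.

Lemma horner_poly_iter_shift j s0 :
  exists s, (poly_iter g j).[x0 + P * s0] = x0 + P * s /\
            eqmod P s (a ^+ j * s0 + b * \sum_(l < j) a ^+ l).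
Proof.
elim: j => [|j [s [hjs hs]]].
  by exists s0; rewrite hornerX big_ord0; split=> //; exists 0; ring.
have [e he] := horner_add_deriv g x0 (P * s).
exists (b + s * a + P * s ^+ 2 * e); split.
  by rewrite poly_iterS horner_comp hjs he gx0 /a; ring.
apply: eqmod_trans (_ : eqmod P _ (b + s * a)) _; first by exists (s ^+ 2 * e); ring.
apply: eqmod_trans (eqmodD (eqmod_refl b) (eqmodM hs (eqmod_refl a))) _.
have -> : \sum_(l < j.+1) a ^+ l = 1 + (\sum_(l < j) a ^+ l) * a.
  by rewrite big_ord_recl mulr_suml; congr (_ + _); apply: eq_bigr => l _; rewrite exprSr.
by exists 0; rewrite exprSr; ring.
Qed.

End PolyIter.

Section PadicDivision.
Variable p : nat.
Hypothesis p_prime : prime p.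

Lemma pbaseE : pbase p = p.
Proof. by rewrite /pbase; apply/maxn_idPl; apply: prime_gt1. Qed.

Lemma padic_natr_val (m k : nat) :
  proj1_sig (m%:R : padic_int p) k = (m %% pbase p ^ k)%N.
Proof. by elim: m => [|m IH] //; rewrite mulrS /= /mk_op IH /= /mk_op modnDm. Qed.

Lemma padic_mulp_eq0 (c : padic_int p) : (p%:R : padic_int p) * c = 0 -> c = 0.
Proof.
move=> pc0; apply: Zp_eq => k /=; rewrite /mk_op mod0n.
have /eqP : (p * proj1_sig c k.+1 %% pbase p ^ k.+1 = 0)%N.
  move: (f_equal (fun y : padic_int p => proj1_sig y k.+1) pc0) => /=.
  by rewrite /mk_op padic_natr_val modnMml mod0n.
rewrite -/(dvdn _ _) pbaseE expnS dvdn_pmul2l ?prime_gt0 // => /eqP.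
by rewrite -(Zp_small c k) -Zp_compat pbaseE.
Qed.

Lemma padic_lreg_p : GRing.lreg (p%:R : padic_int p).
Proof.
move=> u v /eqP; rewrite -subr_eq0 -mulrBr => /eqP /padic_mulp_eq0 /eqP.
by rewrite subr_eq0 => /eqP.
Qed.

Lemma pdivn_mul n (c : padic_int p) : pdivn p n ((p%:R) ^+ n * c) = c.
Proof.
rewrite /pdivn; case: pselect => [h|[]]; last by exists c.
by case: (cid h) => d /= /(lregX padic_lreg_p).
Qed.

End PadicDivision.

Lemma cycle_rep_poly_iter (p : nat) (f : {poly padic_int p}) n k x i j :
  is_cycle_rep f n k x -> (i < k)%N ->
  congp p n (poly_iter f j).[x i] (x ((i + j) %% k)%N).
Proof.
move=> [k_gt0 [_ fx]] ik; elim: j => [|j IH].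
  by rewrite addn0 modn_small // hornerX; apply: eqmod_refl.
rewrite poly_iterS horner_comp; apply: eqmod_trans (eqmod_horner f IH) _.
apply: eqmod_trans (fx _ _) _; first by rewrite ltn_mod.
by rewrite -addn1 modnDml addn1 addnS; apply: eqmod_refl.
Qed.

Theorem lemma2p3 (p : nat) (hp : prime p) (f : {poly padic_int p}) (n k r : nat)
    (x y : nat -> padic_int p) :
  (1 <= n)%N -> (1 <= r)%N ->
  is_cycle_rep f n k x ->
  is_lift_rep f n k x (k * r) y ->
  let a_n := fun z : padic_int p => ((poly_iter f k)^`()).[z] in
  let b_n := fun z : padic_int p => pdivn p n ((poly_iter f k).[z] - z) in
  let a_n1 := fun z : padic_int p => ((poly_iter f (k * r))^`()).[z] in
  (* p * b_(n+1)(z) = (f^(kr)(z) - z) / p^n *)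
  let p_b_n1 := fun z : padic_int p => pdivn p n ((poly_iter f (k * r)).[z] - z) in
  forall i t : nat, (i < k)%N -> (t <= p - 1)%N ->
    let z := x i + (p%:R) ^+ n * t%:R in
    congp p n (a_n1 z) (a_n (x i) ^+ r) /\
    congp p n (p_b_n1 z)
      (t%:R * (a_n (x i) ^+ r - 1)
       + b_n (x i) * \sum_(j < r) a_n (x i) ^+ j).
Proof.
move=> _ _ cyc _ a_n b_n a_n1 p_b_n1 i t ik _ z.
rewrite /a_n1 /p_b_n1 poly_iterM; set g := poly_iter f k.
have gx : g.[x i] = x i + p%:R ^+ n * b_n (x i).
  have [c hc] : congp p n g.[x i] (x i).
    by have := cycle_rep_poly_iter k cyc ik; rewrite modnDr modn_small.
  by rewrite /b_n -/g hc pdivn_mul // -hc; ring.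
have zx : congp p n z (x i) by exists t%:R; rewrite /z; ring.
split; first by have := deriv_poly_iter_eqmod gx r zx.
have [s [-> hs]] := horner_poly_iter_shift gx r t%:R.
have -> : x i + p%:R ^+ n * s - z = p%:R ^+ n * (s - t%:R) by rewrite /z; ring.
rewrite pdivn_mul //.
apply: eqmod_trans (eqmodD hs (eqmod_refl (- t%:R))) _.
by exists 0; ring.
Qed.
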